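(* For every fixed integer $k\ge1$, the asymptotic approximation ratio of $NFk$ for the $k$-times bin packing problem equals $2$; that is, $$\limsup_{N\to\infty}\ \sup\left\{\frac{NFk(D_k)}{OPT(D_k)}\ :\ D \text{ an instance with } OPT(D_k)\ge N\right\}=2.$$
   Context: Let $S>0$ be a bin capacity and $D=(x_1,\dots,x_n)$ a list of items with sizes in $(0,S]$. For $k\ge1$, $D_k$ is the sequence of $k$ consecutive copies of $D$: $x_1^1,\dots,x_n^1,\dots,x_1^k,\dots,x_n^k$. A $k$-times bin packing is an assignment of all elements of $D_k$ to bins so that each bin has total size at most $S$ and no bin contains two copies of the same item; $OPT(D_k)$ is the minimum number of bins. The algorithm $NFk$ processes $D_k$ in this order keeping a single open bin: if the current element fits into the open bin (total size stays at most $S$) and the open bin contains no copy of the same item, it is placed there; otherwise the open bin is closed forever and a new bin is opened containing the current element. $NFk(D_k)$ is the number of bins produced. *)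

From mathcomp Require Import all_boot all_order all_algebra.
From mathcomp Require Import all_classical all_reals ereal sequences.
Set Implicit Arguments. Unset Strict Implicit. Unset Printing Implicit Defensive.
Import Order.TTheory GRing.Theory Num.Theory.
Local Open Scope ring_scope.

Section KBinPacking.
Variable R : realType.

Definition valid_instance (S : R) (D : seq R) : Prop :=
  forall x, x \in D -> 0 < x /\ x <= S.

Definition Dk (k : nat) (D : seq R) : seq (nat * R) :=
  flatten (nseq k [seq (i, nth 0 D i) | i <- iota 0 (size D)]).

(* State of NFk: (number of bins opened so far, load of the open bin,
   indices of the items whose copies are in the open bin).
   When no bin has been opened yet (count 0) a new bin is opened. *)
Definition nf_step (S : R) (st : nat * R * seq nat) (e : nat * R)
  : nat * R * seq nat :=
  let: (cnt, load, content) := st in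
  let: (i, x) := e in
  if (0 < cnt)%N && (load + x <= S) && (i \notin content)
  then (cnt, load + x, i :: content)
  else (cnt.+1, x, [:: i]).

Definition NFk (S : R) (k : nat) (D : seq R) : nat :=
  (foldl (nf_step S) (0%N, 0, [::]) (Dk k D)).1.1.

(* A k-times packing of D into m bins: copy j (j < k) of item i (i < n)
   goes to bin f j i < m; every bin has total size at most S and no bin
   contains two copies of the same item. *)
Definition k_packing (S : R) (k : nat) (D : seq R) (m : nat)
  (f : 'I_k -> 'I_(size D) -> 'I_m) : Prop :=
  (forall b : 'I_m,
     \sum_(j < k) \sum_(i < size D | f j i == b) nth 0 D i <= S)
  /\ (forall (i : 'I_(size D)) (j j' : 'I_k), f j i = f j' i -> j = j').

Definition k_packable (S : R) (k : nat) (D : seq R) (m : nat) : Prop :=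
  exists f : 'I_k -> 'I_(size D) -> 'I_m, @k_packing S k D m f.

Definition is_OPT (S : R) (k : nat) (D : seq R) (m : nat) : Prop :=
  k_packable S k D m /\ forall m', k_packable S k D m' -> (m <= m')%N.

Definition NFk_sup_ratio (S : R) (k N : nat) : \bar R :=
  ereal_sup [set r : \bar R | exists (D : seq R) (m : nat),
     [/\ valid_instance S D, is_OPT S k D m, (N <= m)%N &
         r = ((NFk S k D)%:R / m%:R)%:E]].

End KBinPacking.

(** Upper bound: within one copy of D the item indices increase, so a bin can
    be closed because it already holds a copy of the next item only while the
    bin left open by the previous copy is still open.  Every other closing
    happens because the next item of size x does not fit, and then the
    potential S * #bins + (load of the open bin) grows by at most 2x.  Hence
    S * NFk(D_k) <= 2 k vol(D) + k S <= 2 S OPT(D_k) + k S, the last step being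
    the volume bound k vol(D) <= S OPT(D_k).

    Lower bound: for D = (S/2, e, S/2, e, ..., S/2, e) of length 4q with
    e = S/(4q), NFk opens a new bin for every item S/2, i.e. 2kq bins, while
    k + kq bins suffice (each copy puts its small items together and pairs its
    big ones).  So the ratio is squeezed between 2 - 2/(N+1) and
    2 + 2k/(N+1). *)

From mathcomp Require Import all_boot all_order all_algebra.
From mathcomp Require Import all_classical all_reals ereal sequences.
From mathcomp Require Import topology normedtype.
From mathcomp Require Import ring lra zify.
Import Order.TTheory GRing.Theory Num.Theory.
Local Open Scope ring_scope.

Lemma ler_sum_card (R : numDomainType) (I : finType) (P : pred I) (F : I -> R) c n :
  0 <= c -> (forall i, P i -> F i = c) -> (#|P| <= n)%N ->
  \sum_(i | P i) F i <= c *+ n.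
Proof.
move=> c_ge0 F_eq P_le; rewrite (eq_bigr (fun=> c)) // sumr_const.
exact: ler_wpMn2l.
Qed.

Section KTimesNextFit.
Local Set Implicit Arguments.
Local Unset Strict Implicit.
Variable R : realType.

Lemma k_packing_volume (S : R) k (D : seq R) m :
  k_packable S k D m -> k%:R * \sum_(i < size D) nth 0 D i <= m%:R * S.
Proof.
move=> [f [bin_le _]].
have copy_sum (j : 'I_k) : \sum_(i < size D) nth 0 D i =
    \sum_(b < m) \sum_(i < size D | f j i == b) nth 0 D i.
  exact: (partition_big (f j) xpredT).
have -> : m%:R * S = \sum_(b < m) S by rewrite sumr_const card_ord mulr_natl.
have -> : k%:R * \sum_(i < size D) nth 0 D i =
    \sum_(j < k) \sum_(i < size D) nth 0 D i by rewrite sumr_const card_ord mulr_natl.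
rewrite (eq_bigr _ (fun j _ => copy_sum j)) exchange_big /=.
by apply: ler_sum => b _; exact: bin_le.
Qed.

Lemma is_OPT_exists (S : R) k (D : seq R) m :
  k_packable S k D m -> exists2 n, is_OPT S k D n & (n <= m)%N.
Proof.
move=> m_packable.
have packable_ex : exists n, `[< k_packable S k D n >] by exists m; apply/asboolP.
case: (ex_minnP packable_ex) => n /asboolP n_packable n_min.
exists n; last exact/n_min/asboolP.
by split=> // n' /asboolP /n_min.
Qed.

Definition indexed_items (D : seq R) : seq (nat * R) :=
  [seq (i, nth 0 D i) | i <- iota 0 (size D)].

Lemma sum_indexed_items (D : seq R) :
  \sum_(e <- indexed_items D) e.2 = \sum_(i < size D) nth 0 D i.
Proof. by rewrite big_map -(big_mkord xpredT) /index_iota subn0. Qed.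

Section UpperBound.
Variable S : R.
Hypothesis S_gt0 : 0 < S.

Local Notation state := (nat * R * seq nat)%type.

Definition nf_potential (st : state) : R := S * st.1.1%:R + st.1.2.

Definition nf_pass_inv (M : R) (lo : nat) (st : state) : Prop :=
  0 <= st.1.2 /\
  (nf_potential st <= M \/
   [/\ nf_potential st <= M + S, (0 < st.1.1)%N & all (fun j => j < lo)%N st.2]).

Lemma nf_step_pass_inv M lo st i x : 0 <= x -> (lo <= i)%N ->
  nf_pass_inv M lo st -> nf_pass_inv (M + 2 * x) i.+1 (nf_step S st (i, x)).
Proof.
case: st => [[c l] ct] x_ge0 lo_le_i [/= l_ge0 inv].
rewrite /nf_step /nf_pass_inv /nf_potential /= in inv *.
case: ifP => [/andP[/andP[c_gt0 fits] _]|not_placed] /=.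
  split; first lra.
  case: inv => [?|[? _ ct_lo]]; [left; lra|right].
  split=> //=; first lra.
  by rewrite ltnSn; apply/allP => j /(allP ct_lo) /=; lia.
split=> //; right; split=> //; last by rewrite ltnSn.
rewrite -addn1 natrD mulrDr mulr1.
case: inv => [?|[? c_gt0 ct_lo]]; first lra.
have i_fresh : i \notin ct by apply/negP => /(allP ct_lo) /=; lia.
have : ~~ (l + x <= S) by apply/negP => fits; rewrite c_gt0 fits i_fresh in not_placed.
by rewrite -ltNge => ?; lra.
Qed.

Lemma nf_pass_potential (l : seq (nat * R)) M lo st :
  nf_pass_inv M lo st -> all (fun e => lo <= e.1)%N l ->
  sorted ltn (map fst l) -> (forall e, e \in l -> 0 <= e.2) ->
  let st' := foldl (nf_step S) st l in
  0 <= st'.1.2 /\ nf_potential st' <= M + 2 * \sum_(e <- l) e.2 + S.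
Proof.
elim: l M lo st => [|[i x] l IH] M lo st /=.
  move=> [l_ge0 inv] _ _ _; split=> //; rewrite big_nil mulr0 addr0.
  case: inv => [pot_le|[pot_le _ _] //].
  by rewrite (le_trans pot_le) // lerDl ltW.
move=> inv /andP[lo_le_i l_ge] sorted_l sizes_ge0.
have x_ge0 : 0 <= x by apply: (sizes_ge0 (i, x)); rewrite mem_head.
move: sorted_l; rewrite path_sortedE; last exact: ltn_trans.
move=> /andP[l_gt_i sorted_l].
have [] := IH _ i.+1 _ (nf_step_pass_inv x_ge0 lo_le_i inv).
- by move: l_gt_i; rewrite all_map.
- exact: sorted_l.
- by move=> e le; apply: sizes_ge0; rewrite in_cons le orbT.
by move=> ? ?; split=> //; rewrite big_cons /=; lra.
Qed.

Lemma nf_potential_copies (D : seq R) r st :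
  (forall x, x \in D -> 0 <= x) -> 0 <= st.1.2 ->
  let st' := foldl (nf_step S) st (flatten (nseq r (indexed_items D))) in
  0 <= st'.1.2 /\
  nf_potential st' <= nf_potential st + r%:R * (2 * \sum_(i < size D) nth 0 D i + S).
Proof.
move=> D_ge0; elim: r st => [|r IH] st st_ge0 /=; first by split=> //; lra.
rewrite foldl_cat.
have [] := @nf_pass_potential (indexed_items D) (nf_potential st) 0 st.
- by split=> //; left.
- exact/allP.
- by rewrite -map_comp map_id_in ?iota_ltn_sorted.
- move=> e /mapP[i]; rewrite mem_iota add0n => /andP[_ iD] -> /=.
  exact: D_ge0 (mem_nth 0 iD).
rewrite sum_indexed_items => pass_ge0 pass_le.
have [rest_ge0 rest_le] := IH _ pass_ge0.
by split=> //; rewrite -natr1; lra.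
Qed.

Lemma NFk_le_packable k (D : seq R) m : valid_instance S D ->
  k_packable S k D m -> (NFk S k D <= 2 * m + k)%N.
Proof.
move=> D_valid D_packable.
have [load_ge0 potential_le] := @nf_potential_copies D k (0%N, 0, [::])
  (fun x xD => ltW (D_valid x xD).1) (lexx 0).
move: load_ge0 potential_le.
rewrite /nf_potential /= mulr0 addr0 add0r -/(Dk k D) -/(NFk S k D).
have := k_packing_volume D_packable.
rewrite -(ler_nat R) natrD natrM -(ler_pM2l S_gt0); lra.
Qed.

End UpperBound.

Section HardInstance.
Variables (S : R) (q k : nat).
Hypotheses (S_gt0 : 0 < S) (q_gt0 : (0 < q)%N).

Definition small_item : R := S / (4 * q)%:R.

Definition hard_instance : seq R :=
  mkseq (fun i => if odd i then small_item else S / 2) (4 * q).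

Lemma size_hard_instance : size hard_instance = (4 * q)%N.
Proof. by rewrite size_mkseq. Qed.

Lemma nth_hard_instance i : (i < 4 * q)%N ->
  nth 0 hard_instance i = if odd i then small_item else S / 2.
Proof. by move=> ?; rewrite nth_mkseq. Qed.

Lemma small_item_gt0 : 0 < small_item.
Proof. by rewrite divr_gt0 // ltr0n; lia. Qed.

Lemma small_item_le_half : small_item <= S / 2.
Proof.
rewrite ler_pdivrMr ?ltr0n; last lia.
by rewrite mulrAC ler_pdivlMr // ler_pM2l // ler_nat; lia.
Qed.

Lemma valid_hard_instance : valid_instance S hard_instance.
Proof.
move=> x /mapP[i _ ->]; have := small_item_gt0; have := small_item_le_half.
by case: ifP => _; lra.
Qed.

Definition nf_half_full (st : nat * R * seq nat) : bool :=
  (st.1.1 == 0)%N || (S / 2 < st.1.2).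

Lemma nf_step_hard_pair st i : nf_half_full st ->
  let st' := nf_step S (nf_step S st (2 * i, S / 2)) ((2 * i).+1, small_item) in
  st'.1.1 = st.1.1.+1 /\ nf_half_full st'.
Proof.
case: st => [[c l] ct] /=; rewrite /nf_half_full /nf_step /= => half_full.
have -> : (0 < c)%N && (l + S / 2 <= S) && (2 * i \notin ct) = false.
  case/orP: half_full => [/eqP -> //| l_gt].
  have too_big : (l + S / 2 <= S) = false by apply/negbTE; rewrite -ltNge; lra.
  by rewrite too_big andbF.
rewrite ifT /=; last by rewrite mem_seq1 eqn_leq ltnn andbT; have := small_item_le_half; lra.
by split=> //; have := small_item_gt0; lra.
Qed.

Lemma nf_hard_prefix r st : (2 * r <= 4 * q)%N -> nf_half_full st ->
  let st' := foldl (nf_step S) st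
    [seq (i, nth 0 hard_instance i) | i <- iota 0 (2 * r)] in
  st'.1.1 = (st.1.1 + r)%N /\ nf_half_full st'.
Proof.
elim: r => [|r IH] r_le half_full; first by rewrite /= addn0.
have -> : (2 * r.+1 = 2 * r + 2)%N by lia.
rewrite iotaD map_cat foldl_cat add0n /= !nth_hard_instance; try lia.
rewrite /= !oddM /=.
have [count_eq half_full'] := IH ltac:(lia) half_full.
have [-> ->] := nf_step_hard_pair r half_full'.
by rewrite count_eq addnS.
Qed.

Lemma NFk_hard_instance : NFk S k hard_instance = (k * (2 * q))%N.
Proof.
rewrite /NFk /Dk size_hard_instance (_ : 4 * q = 2 * (2 * q))%N; last lia.
suff copies st : nf_half_full st ->
  let st' := foldl (nf_step S) st (flatten (nseq k
    [seq (i, nth 0 hard_instance i) | i <- iota 0 (2 * (2 * q))])) in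
  st'.1.1 = (st.1.1 + k * (2 * q))%N /\ nf_half_full st'.
  by have [-> _] := copies (0%N, 0, [::]) isT.
elim: k st => [|k' IH] st half_full /=; first by rewrite addn0.
rewrite foldl_cat.
have [count_eq half_full'] := @nf_hard_prefix (2 * q) st ltac:(lia) half_full.
have [-> ->] := IH _ half_full'.
by rewrite count_eq; split=> //; lia.
Qed.

(* Copy j puts its small items into bin j and its big items 4t and 4t+2
   together into bin k + j q + t. *)
Definition hard_bin (j i : nat) : nat :=
  if odd i then j else (k + j * q + i %/ 4)%N.

Lemma hard_bin_lt j i : (j < k)%N -> (i < size hard_instance)%N ->
  (hard_bin j i < k + k * q)%N.
Proof.
rewrite size_hard_instance /hard_bin => j_lt i_lt; case: ifP => _; first lia.
have : (i %/ 4 < q)%N by rewrite ltn_divLR //; lia.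
have : (j.+1 * q <= k * q)%N by rewrite leq_mul2r j_lt orbT.
rewrite mulSn; lia.
Qed.

Definition hard_packing (j : 'I_k) (i : 'I_(size hard_instance)) : 'I_(k + k * q) :=
  Ordinal (hard_bin_lt (ltn_ord j) (ltn_ord i)).

Definition bin_copy (b : nat) : nat := if (b < k)%N then b else ((b - k) %/ q)%N.

Lemma bin_copy_lt (b : 'I_(k + k * q)) : (bin_copy b < k)%N.
Proof.
rewrite /bin_copy; case: ifP => // /negbT; rewrite -leqNgt => k_le_b.
by rewrite ltn_divLR //; have := ltn_ord b; lia.
Qed.

Lemma bin_copy_hard_packing j i : bin_copy (hard_packing j i) = j.
Proof.
have i_lt : (i < 4 * q)%N by rewrite -size_hard_instance.
rewrite /bin_copy /= /hard_bin.
case: (odd i); first by rewrite ltn_ord.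
rewrite ifN; last lia.
rewrite (_ : k + j * q + i %/ 4 - k = j * q + i %/ 4)%N; last lia.
by rewrite divnMDl // divn_small ?addn0 // ltn_divLR //; lia.
Qed.

Lemma card_hard_big_bin (j : 'I_k) (b : 'I_(k + k * q)) : (k <= b)%N ->
  (#|[pred i | hard_packing j i == b]| <= 2)%N.
Proof.
move=> k_le_b; rewrite cardE -(size_map val).
pose t := (b - k - j * q)%N.
apply: (@uniq_leq_size _ _ [:: (4 * t)%N; (4 * t + 2)%N]).
  by rewrite map_inj_uniq ?enum_uniq //; exact: val_inj.
move=> x /mapP[i]; rewrite mem_enum => /eqP /(congr1 val) /= bin_eq ->.
move: bin_eq; rewrite /hard_bin /t; have := ltn_ord j.
case: ifP => [_ |/negbT odd_i] ? bin_eq; first lia.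
by rewrite !inE; apply/orP; lia.
Qed.

Lemma hard_copy_load (j : 'I_k) (b : 'I_(k + k * q)) :
  \sum_(i < size hard_instance | hard_packing j i == b) nth 0 hard_instance i <= S.
Proof.
have := small_item_gt0; have := small_item_le_half.
have [b_lt|k_le_b] := ltnP b k => small_le small_gt0.
  have -> : S = small_item *+ (4 * q).
    by rewrite -mulr_natl mulrC mulfVK // pnatr_eq0; lia.
  apply: ler_sum_card; first lra.
    move=> i /eqP /(congr1 val) /=; rewrite nth_hard_instance -?size_hard_instance //.
    by rewrite /hard_bin; case: ifP => // _; lia.
  by rewrite -size_hard_instance -[X in (_ <= X)%N]card_ord max_card.
have -> : S = (S / 2) *+ 2 by rewrite -mulr_natl; lra.
apply: ler_sum_card; [lra | | exact: card_hard_big_bin].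
move=> i /eqP /(congr1 val) /=; rewrite nth_hard_instance -?size_hard_instance //.
by rewrite /hard_bin; case: ifP => // _; have := ltn_ord j; lia.
Qed.

Lemma hard_packing_k_packing : k_packing S hard_packing.
Proof.
split=> [b|i j j' same_bin]; last first.
  apply: val_inj.
  by rewrite /= -(bin_copy_hard_packing j i) same_bin bin_copy_hard_packing.
rewrite (bigD1 (Ordinal (bin_copy_lt b))) //= [X in _ + X]big1 ?addr0.
  exact: hard_copy_load.
move=> j j_neq; apply: big1 => i /eqP same_bin.
by case/eqP: j_neq; apply: val_inj; rewrite /= -same_bin bin_copy_hard_packing.
Qed.

End HardInstance.

Section RatioBounds.
Variables (S : R) (k : nat).
Hypothesis S_gt0 : 0 < S.

Lemma NFk_sup_ratio_le N : (0 < N)%N ->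
  (NFk_sup_ratio S k N <= (2 + 2 * k%:R / N.+1%:R)%:E)%E.
Proof.
move=> N_gt0; apply: ge_ereal_sup => _ [D [m [D_valid [m_packable _] N_le_m ->]]].
have NF_le : (NFk S k D)%:R <= 2 * m%:R + k%:R :> R.
  by rewrite -natrM -natrD ler_nat NFk_le_packable.
have m_ratio : 1 <= 2 * m%:R / N.+1%:R :> R.
  by rewrite ler_pdivlMr ?ltr0n // mul1r -natrM ler_nat; lia.
have := ler_wpM2l (ler0n R k) m_ratio; rewrite mulr1 => k_le.
rewrite lee_fin ler_pdivrMr ?ltr0n; last lia.
apply: le_trans NF_le _.
have -> : (2 + 2 * k%:R / N.+1%:R) * m%:R =
    2 * m%:R + k%:R * (2 * m%:R / N.+1%:R) :> R by ring.
by rewrite lerD2l.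
Qed.

Lemma NFk_sup_ratio_ge N : (0 < k)%N ->
  ((2 - 2 / N.+1%:R)%:E <= NFk_sup_ratio S k N)%E.
Proof.
move=> k_gt0; have q_gt0 := ltn0Sn N.
have [m m_OPT m_le] := is_OPT_exists (ex_intro _ _ (hard_packing_k_packing k S_gt0 q_gt0)).
have NF_eq := NFk_hard_instance k S_gt0 q_gt0.
have := NFk_le_packable S_gt0 (valid_hard_instance S_gt0 q_gt0) m_OPT.1.
rewrite NF_eq => NF_le.
apply: le_trans (ereal_sup_ubound _); last first.
  exists (hard_instance S N.+1), m; split=> //; first exact: valid_hard_instance.
  by move: NF_le; nia.
rewrite lee_fin NF_eq ler_pdivlMr ?ltr0n; last by move: NF_le; nia.
have coef_ge0 : 0 <= 2 - 2 / N.+1%:R :> R.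
  by rewrite subr_ge0 ler_pdivrMr ?ltr0n // ler_pMr // ler1n.
have m_le_R : m%:R <= k%:R + k%:R * N.+1%:R :> R by rewrite -natrM -natrD ler_nat.
apply: le_trans (ler_wpM2l coef_ge0 m_le_R) _.
have -> : (2 - 2 / N.+1%:R) * (k%:R + k%:R * N.+1%:R) =
    (k * (2 * N.+1))%:R - 2 * k%:R / N.+1%:R :> R.
  by rewrite !natrM; field.
by rewrite lerBlDr lerDl divr_ge0 // mulr_ge0.
Qed.

End RatioBounds.

End KTimesNextFit.

Lemma cvg_harmonic_shift (R : realType) (a c : R) :
  ((fun N : nat => (a + c / N.+1%:R)%:E) @ \oo --> a%:E)%classic.
Proof.
apply: cvg_EFin; first exact: nearW.
have := cvgD (cvg_cst (a : R^o)) (cvgMl_tmp (a := c) (@cvg_harmonic R)).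
by rewrite mulr0 addr0; apply.
Qed.

Theorem theorem3 (R : realType) (S : R) (hS : 0 < S) (k : nat) (hk : (1 <= k)%N) :
  limn_esup (fun N : nat => NFk_sup_ratio S k N) = (2%:R)%:E.
Proof.
apply: (cvg_limn_einf_sup _).2.
apply: (@squeeze_cvge _ _ _ _ (fun N => (2 + (-2) / N.+1%:R)%:E) _
  (fun N => (2 + 2 * k%:R / N.+1%:R)%:E)); last 2 first.
- exact: cvg_harmonic_shift.
- exact: cvg_harmonic_shift.
exists 1%N => // N /= N_gt0; rewrite mulNr NFk_sup_ratio_ge //=.
exact: NFk_sup_ratio_le.
Qed.
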